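(* For any natural numbers $N,d \geq 1$ there are infinitely many primes not in $\mathcal S_{d,N}$.
   Context: For $N\ge1$ let $\Pi_N=\{\prod_{n=1}^N n^{k_n} : k_n\in\{0,1,2,\dots\}\}$; for $d\ge1$ let $\Sigma_{d,N}=\{m_1+\dots+m_d : m_i\in\Pi_N\}$ and $\mathcal S_{d,N}=\bigcup_{i=1}^d\Sigma_{i,N}$. *)

From mathcomp Require Import all_boot.
Set Implicit Arguments. Unset Strict Implicit. Unset Printing Implicit Defensive.

Definition in_Pi (N m : nat) : Prop :=
  exists k : nat -> nat, m = \prod_(1 <= n < N.+1) n ^ k n.

Definition in_Sigma (d N m : nat) : Prop :=
  exists f : 'I_d -> nat, (forall i, in_Pi N (f i)) /\ m = \sum_(i < d) f i.

Definition in_S (d N m : nat) : Prop :=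
  exists i, 1 <= i <= d /\ in_Sigma i N m.

From mathcomp Require Import all_boot zify.
Set Implicit Arguments. Unset Strict Implicit. Unset Printing Implicit Defensive.

(* Every element of S_{d,N} up to 2^e is a sum of at most d
   monomials prod_{n <= N} n^(k_n) with all relevant exponents k_n <= e, so there
   are at most ((e+1)^N + 1)^d of them: polynomially many in e.  On the other
   hand 2^n <= C(2n, n) <= (2n)^pi(2n) (each prime power dividing C(2n,n) is at
   most 2n), so pi(2^(e+1)) >= 2^e/(e+1) grows exponentially in e.  Hence for
   large e some prime p <= 2^(e+1) beyond any bound M is not in S_{d,N}. *)

Lemma leq_exp2rW m n e : m <= n -> m ^ e <= n ^ e.
Proof. by move=> le_mn; elim: e => // e IHe; rewrite !expnS leq_mul. Qed.

Lemma uniq_count_leq_size (s t : seq nat) (a : pred nat) : uniq s ->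
  {in s, forall p, a p -> p \in t} -> count a s <= size t.
Proof.
move=> s_uniq sub_st; rewrite -size_filter uniq_leq_size ?filter_uniq // => p.
by rewrite mem_filter => /andP[ap ps]; apply: sub_st.
Qed.

Lemma succ_exp_leq b N d : 1 < b -> ((b ^ N).+1) ^ d <= b ^ (N.+1 * d).
Proof.
move=> b_gt1; rewrite expnM leq_exp2rW // expnS.
by have := expn_gt0 b N; nia.
Qed.

Lemma sqr_leq_exp2 n : 4 <= n -> n * n <= 2 ^ n.
Proof.
move=> le_4n; have [k ->] : exists k, n = k + 4 by exists (n - 4); lia.
by elim: k => [|k IHk] //; rewrite addSn expnS; nia.
Qed.

(* With [m := C + K + 7], [j := m * K.+1] works:
   [j.+2 <= 2 ^ m] and [C < 2 ^ m], so [C * j.+2 ^ K < 2 ^ (m * K.+1)]. *)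
Lemma exp2_dominates_poly C K : exists j, C * j.+2 ^ K < 2 ^ j.
Proof.
pose m := C + K + 7.
have sq_m : m * m <= 2 ^ m by apply: sqr_leq_exp2; rewrite /m; lia.
exists (m * K.+1).
have le_j : (m * K.+1).+2 <= 2 ^ m by rewrite /m in sq_m *; nia.
have lt_C : C < 2 ^ m by rewrite /m in sq_m *; nia.
have := leq_exp2rW K le_j; have := expn_gt0 (m * K.+1).+2 K.
rewrite expnM expnS; nia.
Qed.

Lemma exp2_leq_bin_central n : 2 ^ n <= 'C(n.*2, n).
Proof.
elim: n => [|n IHn] //.
rewrite doubleS binS expnS mul2n -addnn.
have bin_sym : 'C(n.*2.+1, n.+1) = 'C(n.*2.+1, n).
  by rewrite -bin_sub -addnn ?ltnS ?leq_addl // subSS addnK.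
by rewrite bin_sym leq_add // (leq_trans IHn) ?leq_bin2l.
Qed.

Lemma sum_divn_exp_cut p m A B : 1 < p -> m < p ^ A -> 0 < A <= B ->
  \sum_(1 <= k < B) m %/ p ^ k = \sum_(1 <= k < A) m %/ p ^ k.
Proof.
move=> p_gt1 m_lt /andP[A_gt0 le_AB].
rewrite (@big_cat_nat _ _ _ A 1 B _ _ A_gt0 le_AB) /=.
rewrite [X in _ + X]big1_seq ?addn0 // => k /andP[_].
rewrite mem_index_iota => /andP[le_Ak _]; apply: divn_small.
exact: leq_trans m_lt (leq_pexp2l (ltnW p_gt1) le_Ak).
Qed.

Lemma logn_fact_trunc_log p m y : prime p -> m <= y ->
  logn p m`! = \sum_(1 <= k < (trunc_log p y).+1) m %/ p ^ k.
Proof.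
move=> p_pr le_my; have p_gt1 := prime_gt1 p_pr.
set T := trunc_log p y.
have m_lt : m < p ^ T.+1 := leq_ltn_trans le_my (trunc_log_ltn y p_gt1).
rewrite logn_fact // -(@sum_divn_exp_cut p m m.+1 (m.+1 + T.+1)) ?leq_addr //.
  by rewrite (@sum_divn_exp_cut p m T.+1) ?leq_addl.
exact: leq_trans (ltn_expl m p_gt1) (leq_pexp2l (ltnW p_gt1) (leqnSn m)).
Qed.

Lemma divn_double_leq n q : 0 < q -> n.*2 %/ q <= (n %/ q).*2 + 1.
Proof.
move=> q_gt0; rewrite -ltnS ltn_divLR //.
have := divn_eq n q; have := ltn_pmod n q_gt0; rewrite -!addnn; nia.
Qed.

(* Legendre: each of the [trunc_log p (2n)] relevant terms of
   [logn p (2n)! - 2 logn p n!] is a difference [2n/p^k - 2(n/p^k)] <= 1. *)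
Lemma logn_bin_central p n : prime p -> logn p 'C(n.*2, n) <= trunc_log p n.*2.
Proof.
move=> p_pr; have p_gt1 := prime_gt1 p_pr.
have le_n2n : n <= n.*2 by rewrite -addnn leq_addl.
have := congr1 (logn p) (bin_fact le_n2n).
rewrite -addnn addnK addnn !lognM ?muln_gt0 ?fact_gt0 ?bin_gt0 //.
rewrite (logn_fact_trunc_log p_pr (leqnn n.*2)) (logn_fact_trunc_log p_pr le_n2n).
set T := trunc_log p n.*2.
have : \sum_(1 <= k < T.+1) n.*2 %/ p ^ k <=
       \sum_(1 <= k < T.+1) ((n %/ p ^ k).*2 + 1).
  by apply: leq_sum => k _; rewrite divn_double_leq ?expn_gt0 ?(ltnW p_gt1).
rewrite big_split sum_nat_const_nat /= subSS subn0 muln1.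
rewrite -(big_morph double doubleD double0) -addnn; lia.
Qed.

Lemma pfactor_bin_central_leq p n : 0 < n ->
  p ^ logn p 'C(n.*2, n) <= (if prime p && (p <= n.*2) then n.*2 else 1).
Proof.
move=> n_gt0; case p_pr: (prime p); last by rewrite lognE p_pr.
have p_gt1 := prime_gt1 p_pr; have le_log := logn_bin_central n p_pr.
case: (leqP p n.*2) => [le_p2n | lt_2np] /=.
  have n2_gt0 : 0 < n.*2 by rewrite double_gt0.
  exact: leq_trans (leq_pexp2l (ltnW p_gt1) le_log) (trunc_logP p_gt1 n2_gt0).
suff log0 : trunc_log p n.*2 = 0 by move: le_log; rewrite log0 leqn0 => /eqP ->.
by apply/eqP; rewrite trunc_log_eq0; lia.
Qed.

Definition prime_pi x := count prime (iota 0 x.+1).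

Lemma exists_prime_notin x M (s : seq nat) : M.+1 + size s < prime_pi x ->
  exists p, [/\ p <= x, M < p, prime p & p \notin s].
Proof.
move=> lt_pi; have [/hasP[p] | /hasPn no_p] :=
  boolP (has (fun p => [&& M < p, prime p & p \notin s]) (iota 0 x.+1)).
  by rewrite mem_iota ltnS => /andP[_ le_px] /and3P[]; exists p.
move: lt_pi; rewrite ltnNge => /negP; case.
rewrite /prime_pi -(size_iota 0 M.+1) -size_cat.
apply: uniq_count_leq_size (iota_uniq _ _) _ => p /no_p.
rewrite mem_cat mem_iota ltnS /=; case: (ltnP M p) => //= _.
by case: (p \in s) => //=; rewrite andbT => /negbTE ->.
Qed.

Lemma exp2_leq_prime_pi n : 0 < n -> 2 ^ n <= n.*2 ^ prime_pi n.*2.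
Proof.
move=> n_gt0; apply: leq_trans (exp2_leq_bin_central n) _.
have C_gt0 : 0 < 'C(n.*2, n) by rewrite bin_gt0 -addnn leq_addl.
rewrite -{1}(partnT C_gt0) /partn (eq_bigl xpredT) //.
apply: leq_trans (leq_prod (fun p _ => pfactor_bin_central_leq p n_gt0)) _.
rewrite -big_mkcond big_const_seq iter_muln_1 leq_pexp2l ?double_gt0 //.
rewrite /prime_pi -[count prime _]size_filter /index_iota subn0.
apply: uniq_count_leq_size (iota_uniq _ _) _ => p _.
by case/andP=> p_pr le_p2n; rewrite mem_filter p_pr mem_iota.
Qed.

Lemma exp2_leq_prime_pi_exp2 j : 2 ^ j <= j.+1 * prime_pi (2 ^ j.+1).
Proof.
have := exp2_leq_prime_pi (expn_gt0 2 j).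
by rewrite -mul2n -expnS -expnM leq_exp2l.
Qed.

(* Exponents are truncated to ['I_e]; a [None] summand encodes a sum of fewer
   than [d] terms. *)
Definition pi_monomial N e (k : {ffun 'I_N -> 'I_e}) : nat :=
  \prod_(i < N) i.+1 ^ k i.

Definition sigma_sum d N e (g : {ffun 'I_d -> option {ffun 'I_N -> 'I_e}}) : nat :=
  \sum_(t < d) oapp (@pi_monomial N e) 0 (g t).

(* The exponent of [n >= 2] in an element of [Pi_N] below [2 ^ e] is at most [e],
   and the exponent of [1] is irrelevant. *)
Lemma in_Pi_codom N e m : in_Pi N m -> m <= 2 ^ e ->
  m \in codom (@pi_monomial N e.+1).
Proof.
case=> k ->{m}; rewrite big_add1 /= big_mkord => le_prod.
apply/codomP; exists [ffun i : 'I_N => inord (if i == 0 :> nat then 0 else k i.+1)].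
apply: eq_bigr => i _; rewrite ffunE; case: eqP => [-> | i_neq0].
  by rewrite !exp1n.
rewrite inordK // ltnS -(@leq_exp2l 2) //.
have le_2i : 2 <= i.+1 by lia.
apply: leq_trans (leq_exp2rW _ le_2i) (leq_trans _ le_prod).
rewrite (bigD1 i) //= leq_pmulr // prodn_gt0 // => j; exact: expn_gt0.
Qed.

Lemma in_Sigma_codom d N e i m : i <= d -> in_Sigma i N m -> m <= 2 ^ e ->
  m \in codom (@sigma_sum d N e.+1).
Proof.
move=> le_id [f [f_Pi ->{m}]] le_sum.
pose F n := if insub n : option 'I_i is Some t then f t else 0.
have sum_F : \sum_(t < i) f t = \sum_(t < d) F t.
  rewrite (eq_bigr (fun t : 'I_i => F t)) => [|t _]; last by rewrite /F valK.
  rewrite (big_ord_widen d F le_id) big_mkcond.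
  by apply: eq_bigr => t _; rewrite /F; case: insubP => [t' -> | /negbTE ->].
have F_codom (t : 'I_d) : exists o, F t = oapp (@pi_monomial N e.+1) 0 o.
  rewrite /F; case: insubP => [t' _ _ | _]; last by exists None.
  have le_ft : f t' <= 2 ^ e.
    by apply: leq_trans le_sum; rewrite (bigD1 t') //= leq_addr.
  by have /codomP[k ->] := in_Pi_codom (f_Pi t') le_ft; exists (Some k).
have [o def_o] := fin_all_exists F_codom.
apply/codomP; exists [ffun t => o t]; rewrite sum_F /sigma_sum.
by apply: eq_bigr => t _; rewrite ffunE def_o.
Qed.

Lemma in_S_codom d N e m : in_S d N m -> m <= 2 ^ e ->
  m \in codom (@sigma_sum d N e.+1).
Proof. by case=> i [/andP[_ le_id] Sigma_m]; apply: in_Sigma_codom Sigma_m. Qed.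

Lemma size_codom_sigma_sum d N e :
  size (codom (@sigma_sum d N e)) = ((e ^ N).+1) ^ d.
Proof. by rewrite size_codom card_ffun card_option card_ffun !card_ord. Qed.

Theorem corollary6p11 (N d : nat) (hN : 1 <= N) (hd : 1 <= d) :
  forall M : nat, exists p : nat, M < p /\ prime p /\ ~ in_S d N p.
Proof.
move=> M.
have [j lt_poly] := exp2_dominates_poly M.+2 (N.+1 * d).+1.
pose s := codom (@sigma_sum d N j.+2).
have lt_pi : M.+1 + size s < prime_pi (2 ^ j.+1).
  have := exp2_leq_prime_pi_exp2 j; have := succ_exp_leq N d (isT : 1 < j.+2).
  rewrite size_codom_sigma_sum expnS in lt_poly *.
  have := expn_gt0 j.+2 (N.+1 * d); nia.
have [p [le_px lt_Mp p_pr p_notin]] := exists_prime_notin lt_pi.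
exists p; split; [done | split=> // S_p]; case/negP: p_notin.
exact: in_S_codom S_p le_px.
Qed.
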